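(* Let $(\mathcal M,P_1,P_2)$ be a bi-Hamiltonian manifold, let $\mathcal S$ be a symplectic leaf of $P_1$, let $D=P_2(\ker P_1)$ and $E=D\cap T\mathcal S$, and let $\mathcal Q\subset\mathcal S$ be a submanifold transversal to $E$, i.e. $T_{\mathbf w}\mathcal Q\oplus E_{\mathbf w}=T_{\mathbf w}\mathcal S$ for all $\mathbf w\in\mathcal Q$. Choose coordinates on $\mathcal M$ adapted to $\mathcal Q$ (the first group of coordinates restricts to coordinates on $\mathcal Q$, and $\mathcal Q$ is given by the vanishing of the second group), and write the matrix of the Poisson pencil $P_{(\lambda)}=P_2-\lambda P_1$ in block form $$P_{(\lambda)}=\begin{pmatrix}A_{(\lambda)}&B_{(\lambda)}\\ C_{(\lambda)}&D_{(\lambda)}\end{pmatrix}.$$ Suppose that $(\ker P_1)_{\mathbf w}\cap(\ker P_2)_{\mathbf w}=\{0\}$ for all $\mathbf w\in\mathcal Q$. Then: (a) the matrix $D_{(\lambda)}$ is invertible; (b) the matrix representing the reduced Poisson pencil $P'_{(\lambda)}$ on $\mathcal Q$ is $A_{(\lambda)}-B_{(\lambda)}D_{(\lambda)}^{-1}C_{(\lambda)}$; (c) the identity $$P_{(\lambda)}=\begin{pmatrix}P'_{(\lambda)}&B_{(\lambda)}\\0&D_{(\lambda)}\end{pmatrix}\begin{pmatrix}\mathrm{Id}&0\\ D_{(\lambda)}^{-1}C_{(\lambda)}&\mathrm{Id}\end{pmatrix}$$ holds, where $\mathrm{Id}$ denotes identity matrices of the appropriate sizes.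
   Context: For a Poisson tensor $P_a$, the bracket is $\{F,G\}_a=\langle dG,P_a dF\rangle$. The reduced Poisson pencil on the transversal submanifold $\mathcal Q$ is defined as follows: given $\mathbf w\in\mathcal Q$ and $\mathbf v\in T^*_{\mathbf w}\mathcal Q$, one takes an extension $\widehat{\mathbf v}\in T^*_{\mathbf w}\mathcal M$ of $\mathbf v$ such that $(P_{(\lambda)})_{\mathbf w}\widehat{\mathbf v}\in T_{\mathbf w}\mathcal Q$ (such an extension exists), and sets $(P'_{(\lambda)})_{\mathbf w}\mathbf v=(P_{(\lambda)})_{\mathbf w}\widehat{\mathbf v}$. Equivalently, the reduced brackets are $\{f,g\}'_a(\mathbf w)=\{F,G\}_a(\mathbf w)$ for $\mathbf w\in\mathcal Q$, where $F,G$ are extensions of $f,g$ to $\mathcal M$ whose differentials vanish on $D_{\mathbf w}$ for all $\mathbf w\in\mathcal Q$. Geometric objects and the matrices representing them in the chosen coordinates are denoted by the same symbols. *)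

From HB Require Import structures.
From mathcomp Require Import all_boot all_order all_algebra.
Set Implicit Arguments. Unset Strict Implicit. Unset Printing Implicit Defensive.
Import GRing.Theory Num.Theory.
Local Open Scope ring_scope.

(* Pointwise linear-algebra model at a point w of Q, in coordinates adapted to Q:
   coordinates (x, y) with x in R^q (coordinates on Q) and y in R^m (Q = {y = 0}).
   Covectors and tangent vectors at w are column vectors of size q + m; a Poisson
   tensor P at w is the (q+m)x(q+m) matrix acting on covectors: alpha |-> P *m alpha. *)

Section Defs.
Variables (R : realFieldType) (q m : nat).
Local Notation n := (q + m)%N.

Definition skew_symmetric (P : 'M[R]_n) : Prop := P^T = - P.

Definition in_ker (P : 'M[R]_n) (a : 'cV[R]_n) : Prop := P *m a = 0.

Definition in_img (P : 'M[R]_n) (v : 'cV[R]_n) : Prop := exists a, v = P *m a.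

(* T_w S : tangent space of the symplectic leaf of P1 through w = image of (P1)_w *)
Definition in_TS (P1 : 'M[R]_n) (v : 'cV[R]_n) : Prop := in_img P1 v.

Definition in_D (P1 P2 : 'M[R]_n) (v : 'cV[R]_n) : Prop :=
  exists a, in_ker P1 a /\ v = P2 *m a.

Definition in_E (P1 P2 : 'M[R]_n) (v : 'cV[R]_n) : Prop :=
  in_D P1 P2 v /\ in_TS P1 v.

Definition in_TQ (v : 'cV[R]_n) : Prop := dsubmx v = 0.

Definition Q_transversal_to_E (P1 P2 : 'M[R]_n) : Prop :=
  (forall v, in_TQ v -> in_TS P1 v) /\
  (forall v, in_E P1 P2 v -> in_TS P1 v) /\
  (forall v, in_TQ v -> in_E P1 P2 v -> v = 0) /\
  (forall s, in_TS P1 s -> exists t e, in_TQ t /\ in_E P1 P2 e /\ s = t + e).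

Definition kernels_trivial_intersection (P1 P2 : 'M[R]_n) : Prop :=
  forall a, in_ker P1 a -> in_ker P2 a -> a = 0.

Definition pencil (P1 P2 : 'M[R]_n) (l : R) : 'M[R]_n := P2 - l *: P1.

(* P' : 'M_q is the matrix of the reduced pencil (P'_(lambda))_w for the pencil
   matrix Pl: every covector v = a in T*_w Q admits an extension
   hat v = col_mx a b in T*_w M with Pl hat v in T_w Q, and for every such
   extension Pl hat v = P' v (as a tangent vector to Q, i.e. x-components). *)
Definition reduced_pencil_matrix (Pl : 'M[R]_n) (P' : 'M[R]_q) : Prop :=
  forall a : 'cV[R]_q,
    (exists b : 'cV[R]_m, in_TQ (Pl *m col_mx a b)) /\
    (forall b : 'cV[R]_m, in_TQ (Pl *m col_mx a b) ->
        usubmx (Pl *m col_mx a b) = P' *m a).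

End Defs.

(* Key fact: a covector [al] at [w] that vanishes on [T Q] and such that
   [P_(l) al] is tangent to [Q] is zero.  Indeed [P2 al] then lies in
   [T S = im P1], so by skew symmetry [al] vanishes on [E = P2 (ker P1)],
   hence on [T S = T Q (+) E], i.e. [al] lies in [ker P1].  Then
   [P_(l) al = P2 al] lies in [T Q ∩ E = 0], so [al] lies in
   [ker P1 ∩ ker P2 = 0].  Applied to [al = (0, b)], whose image has
   [y]-part [D_(l) b], this makes [D_(l)] injective; the rest is the Schur
   complement calculus of the block matrix [P_(l)]. *)
From HB Require Import structures.
From mathcomp Require Import all_boot all_order all_algebra.
Import GRing.Theory Num.Theory.
Set Implicit Arguments. Unset Strict Implicit.
Local Open Scope ring_scope.

Lemma mulmx_cV_ext (R : fieldType) (p n : nat) (A B : 'M[R]_(p, n)) :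
  (forall v : 'cV[R]_n, A *m v = B *m v) -> A = B.
Proof.
move=> eqAB; apply: trmx_inj; apply/eqP/mulmxP => u.
by apply: trmx_inj; rewrite !trmx_mul !trmxK eqAB.
Qed.

Lemma unitmx_cV_inj (R : fieldType) (n : nat) (D : 'M[R]_n) :
  (forall b : 'cV[R]_n, D *m b = 0 -> b = 0) -> D \in unitmx.
Proof.
move=> injD; rewrite -unitmx_tr -row_free_unit; apply: inj_row_free => v vD0.
apply: trmx_inj; rewrite trmx0; apply: injD.
by rewrite -[D]trmxK -trmx_mul vD0 trmx0.
Qed.

Lemma skew_trmx_mul (R : comPzRingType) (n : nat) (P : 'M[R]_n) (a : 'cV[R]_n) :
  P^T = - P -> (P *m a)^T = - (a^T *m P).
Proof. by move=> skewP; rewrite trmx_mul skewP mulmxN. Qed.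

Lemma annihilates_TQ_lower (R : realFieldType) (q m : nat)
    (b : 'cV[R]_m) (v : 'cV[R]_(q + m)) :
  in_TQ v -> (col_mx 0 b)^T *m v = 0.
Proof.
move=> Qv; rewrite -[v]vsubmxK Qv tr_col_mx mul_row_col trmx0.
by rewrite mul0mx mulmx0 addr0.
Qed.

Section TransversalReduction.
Variables (R : realFieldType) (q m : nat) (P1 P2 : 'M[R]_(q + m)).
Hypotheses (hP1 : skew_symmetric P1) (hP2 : skew_symmetric P2).
Hypothesis htr : Q_transversal_to_E P1 P2.
Hypothesis hker : kernels_trivial_intersection P1 P2.
Variable l : R.

Local Notation Pl := (pencil P1 P2 l).

Lemma in_TS_P2_pencil (a : 'cV[R]_(q + m)) :
  in_TS P1 (Pl *m a) -> in_TS P1 (P2 *m a).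
Proof.
case=> g Plag; exists (g + l *: a).
by rewrite mulmxDr -Plag mulmxBl -scalemxAl -scalemxAr subrK.
Qed.

Lemma pencil_mul_ker (a : 'cV[R]_(q + m)) : in_ker P1 a -> Pl *m a = P2 *m a.
Proof. by move=> P1a; rewrite mulmxBl -scalemxAl P1a scaler0 subr0. Qed.

Lemma annihilates_E (al : 'cV[R]_(q + m)) :
  in_TS P1 (P2 *m al) -> forall e, in_E P1 P2 e -> al^T *m e = 0.
Proof.
case=> g P2al e [[k [P1k ->]] _].
rewrite mulmxA -[al^T *m P2]opprK -skew_trmx_mul // P2al.
by rewrite skew_trmx_mul // opprK -mulmxA P1k mulmx0.
Qed.

Lemma annihilates_TS_in_ker (al : 'cV[R]_(q + m)) :
  (forall s, in_TS P1 s -> al^T *m s = 0) -> in_ker P1 al.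
Proof.
move=> annS; have alP1 : al^T *m P1 = 0.
  by apply: mulmx_cV_ext => g; rewrite -mulmxA annS ?mul0mx //; exists g.
by apply: trmx_inj; rewrite skew_trmx_mul // alP1 oppr0 trmx0.
Qed.

Lemma annihilates_TS (al : 'cV[R]_(q + m)) :
  (forall v, in_TQ v -> al^T *m v = 0) ->
  (forall e, in_E P1 P2 e -> al^T *m e = 0) ->
  forall s, in_TS P1 s -> al^T *m s = 0.
Proof.
move=> annQ annE s /htr.2.2.2 [t [e [Qt [Ee ->]]]].
by rewrite mulmxDr annQ // annE // addr0.
Qed.

Lemma annihilator_TQ_eq0 (al : 'cV[R]_(q + m)) :
  (forall v, in_TQ v -> al^T *m v = 0) -> in_TQ (Pl *m al) -> al = 0.
Proof.
move=> annQ QPlal.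
have TS_P2al : in_TS P1 (P2 *m al) by apply/in_TS_P2_pencil/htr.1.
have P1al : in_ker P1 al.
  by apply/annihilates_TS_in_ker/annihilates_TS/annihilates_E.
have E_P2al : in_E P1 P2 (P2 *m al) by split; [exists al | ].
apply: hker => //; apply: htr.2.2.1 => //.
by rewrite -pencil_mul_ker.
Qed.

Lemma drsubmx_pencil_unit : drsubmx Pl \in unitmx.
Proof.
apply: unitmx_cV_inj => b Db0.
have /eqP : col_mx 0 b = 0 :> 'cV[R]_(q + m).
  apply: annihilator_TQ_eq0; first exact: annihilates_TQ_lower.
  by rewrite /in_TQ -[Pl]submxK mul_block_col col_mxKd mulmx0 add0r.
by rewrite col_mx_eq0 => /andP [_ /eqP].
Qed.

End TransversalReduction.

Section SchurComplement.
Variables (R : realFieldType) (q m : nat) (M : 'M[R]_(q + m)).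
Hypothesis unitD : drsubmx M \in unitmx.

Local Notation A := (ulsubmx M).
Local Notation B := (ursubmx M).
Local Notation C := (dlsubmx M).
Local Notation D := (drsubmx M).

Lemma mul_col_mx_submx (a : 'cV[R]_q) (b : 'cV[R]_m) :
  M *m col_mx a b = col_mx (A *m a + B *m b) (C *m a + D *m b).
Proof. by rewrite -{1}[M]submxK mul_block_col. Qed.

Lemma in_TQ_mul_col_mxP (a : 'cV[R]_q) (b : 'cV[R]_m) :
  in_TQ (M *m col_mx a b) <-> b = - (invmx D *m C *m a).
Proof.
rewrite /in_TQ mul_col_mx_submx col_mxKd; split=> [|->]; last first.
  by rewrite mulmxN !mulmxA mulmxV // mul1mx subrr.
move=> /(congr1 (mulmx (invmx D))); rewrite mulmx0 mulmxDr !mulmxA.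
by rewrite mulVmx // mul1mx => /eqP; rewrite addr_eq0 => /eqP ->; rewrite opprK.
Qed.

Lemma reduced_pencil_matrix_schur (P' : 'M[R]_q) :
  reduced_pencil_matrix M P' <-> P' = A - B *m invmx D *m C.
Proof.
have usubmx_TQ (a : 'cV[R]_q) : usubmx (M *m col_mx a (- (invmx D *m C *m a)))
    = (A - B *m invmx D *m C) *m a.
  by rewrite mul_col_mx_submx col_mxKu mulmxN !mulmxA mulmxBl.
split=> [redP' | -> a].
  apply/esym/mulmx_cV_ext => a; have [_ redP'a] := redP' a.
  by rewrite -usubmx_TQ redP'a //; apply/in_TQ_mul_col_mxP.
split; first by exists (- (invmx D *m C *m a)); apply/in_TQ_mul_col_mxP.
by move=> b /in_TQ_mul_col_mxP ->.
Qed.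

End SchurComplement.

Lemma block_mx_schur_factor (R : comUnitRingType) (q m : nat)
    (A : 'M[R]_q) (B : 'M[R]_(q, m)) (C : 'M[R]_(m, q)) (D : 'M[R]_m) :
  D \in unitmx ->
  block_mx A B C D =
  block_mx (A - B *m invmx D *m C) B 0 D *m block_mx 1%:M 0 (invmx D *m C) 1%:M.
Proof.
move=> unitD; rewrite mulmx_block !mulmx1 !mulmx0 !add0r.
by rewrite !mulmxA mulmxV // mul1mx subrK.
Qed.

Theorem proposition3p1 (R : realFieldType) (q m : nat) (P1 P2 : 'M[R]_(q + m))
  (hP1 : skew_symmetric P1) (hP2 : skew_symmetric P2)
  (htr : Q_transversal_to_E P1 P2)
  (hker : kernels_trivial_intersection P1 P2) :
  forall l : R,
    let A := ulsubmx (pencil P1 P2 l) in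
    let B := ursubmx (pencil P1 P2 l) in
    let C := dlsubmx (pencil P1 P2 l) in
    let D := drsubmx (pencil P1 P2 l) in
    (* (a) *)
    D \in unitmx /\
    (* (b) *)
    (forall P' : 'M[R]_q,
        reduced_pencil_matrix (pencil P1 P2 l) P' <-> P' = A - B *m invmx D *m C) /\
    (* (c) *)
    (forall P' : 'M[R]_q,
        reduced_pencil_matrix (pencil P1 P2 l) P' ->
        pencil P1 P2 l = block_mx P' B 0 D *m block_mx 1%:M 0 (invmx D *m C) 1%:M).
Proof.
move=> l A B C D.
have unitD : D \in unitmx := drsubmx_pencil_unit hP1 hP2 htr hker l.
split=> //; split=> [P' | P' /(reduced_pencil_matrix_schur unitD) ->].
  exact: reduced_pencil_matrix_schur.
by rewrite -block_mx_schur_factor // submxK.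
Qed.
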